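(* Let $q$ be a prime power and $h$ a nonnegative integer. If $M$ is a matroid and $X\subseteq E(M)$ satisfies $r_M(X)\le h$ and $\mathrm{si}(M\setminus X)\cong \mathrm{PG}(r(M)-1,q)$, then $M/X$ has no $(q,h+1)$-stack restriction.
   Context: $\mathrm{si}(\cdot)$ denotes simplification and $\mathrm{PG}(k-1,q)$ the rank-$k$ projective geometry over $\mathrm{GF}(q)$. For a prime power $q$ and nonnegative integers $h,t$, a matroid $S$ is a $(q,h,t)$-stack if there are pairwise disjoint subsets $F_1,\dots,F_h$ of $E(S)$ whose union is spanning in $S$, such that for each $i\in\{1,\dots,h\}$ the matroid $(S/(F_1\cup\dots\cup F_{i-1}))|F_i$ has rank at most $t$ and is not $\mathrm{GF}(q)$-representable. A $(q,h)$-stack is a $(q,h,t)$-stack for some $t\ge 0$. A matroid has a stack restriction if some restriction of it is such a stack. *)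

From HB Require Import structures.
From mathcomp Require Import all_boot all_order all_algebra all_fingroup all_field.
Set Implicit Arguments. Unset Strict Implicit. Unset Printing Implicit Defensive.

Section Matroids.
Variable T : finType.

Definition is_matroid (E : {set T}) (r : {set T} -> nat) : Prop :=
  [/\ forall A : {set T}, A \subset E -> r A <= #|A|,
      forall A B : {set T}, A \subset B -> B \subset E -> r A <= r B &
      forall A B : {set T}, A \subset E -> B \subset E ->
        r (A :|: B) + r (A :&: B) <= r A + r B].

(* rank function of the contraction (by X) of a matroid with rank r:
   r_{M/X}(A) = r(A u X) - r(X).  Ground set of M/X is E :\: X. *)
Definition contr_rank (r : {set T} -> nat) (X : {set T}) : {set T} -> nat :=
  fun A => r (A :|: X) - r X.

Definition GFq_representable (q : nat) (Z : {set T}) (r : {set T} -> nat) : Prop :=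
  exists (F : finFieldType) (n : nat) (f : T -> 'rV[F]_n),
    #|F| = q /\
    forall A : {set T}, A \subset Z -> r A = \rank (\sum_(x in A) <<f x>>)%MS.

(* The matroid (S, r) is isomorphic to PG(k-1, q): for a field F of order q,
   x |-> <f x> is a bijection from S onto the 1-dimensional subspaces of F^k
   and ranks are preserved. *)
Definition iso_PG (S : {set T}) (r : {set T} -> nat) (k q : nat) : Prop :=
  exists (F : finFieldType) (f : T -> 'rV[F]_k),
    [/\ #|F| = q,
        forall x, x \in S -> f x != 0%R,
        forall x y, x \in S -> y \in S -> (f x == f y)%MS -> x = y,
        forall v : 'rV[F]_k, v != 0%R -> exists2 x, x \in S & (f x == v)%MS &
        forall A : {set T}, A \subset S -> r A = \rank (\sum_(x in A) <<f x>>)%MS].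

(* S is a simplification of the matroid (Z, r): a set of non-loops, pairwise
   non-parallel, containing a representative of every parallel class. *)
Definition simplification_set (Z : {set T}) (r : {set T} -> nat) (S : {set T}) : Prop :=
  [/\ S \subset Z,
      forall x, x \in S -> r [set x] = 1,
      forall x y, x \in S -> y \in S -> x != y -> r [set x; y] = 2 &
      forall e, e \in Z -> r [set e] = 1 ->
        exists2 x, x \in S & r [set x; e] = 1].

Definition si_iso_PG (Z : {set T}) (r : {set T} -> nat) (k q : nat) : Prop :=
  exists S, simplification_set Z r S /\ iso_PG S r k q.

Definition is_stack (q h t : nat) (Z : {set T}) (r : {set T} -> nat) : Prop :=
  exists F : nat -> {set T},
    [/\ forall i, i < h -> F i \subset Z,
        forall i j, i < h -> j < h -> i != j -> [disjoint F i & F j],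
        r (\bigcup_(i < h) F i) = r Z &
        forall i, i < h ->
          let G := \bigcup_(j < i) F j in
          contr_rank r G (F i) <= t /\
          ~ GFq_representable q (F i) (contr_rank r G)].

Definition has_stack_restriction (q h : nat) (Z : {set T}) (r : {set T} -> nat) : Prop :=
  exists (t : nat) (Y : {set T}), Y \subset Z /\ is_stack q h t Y r.

Definition prime_power (q : nat) : Prop :=
  exists p k, prime p /\ 0 < k /\ q = p ^ k.

End Matroids.

(* The projective geometry is only used through GF(q)-representability:
   a representation of the simplification extends to M\X (loops go to 0,
   every other element to the vector of its parallel representative).
   Given blocks F_0, ..., F_h of a stack in M/X, let G_i be F_0 u ... u F_(i-1)
   and D_i = r_{M/G_i}(X) = r(G_i u X) - r(G_i).  By submodularity D is
   nonincreasing, and D_0 = r(X) <= h, so over h+1 steps it stalls: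
   D_(i+1) = D_i for some i <= h.  Then X is "skew" to F_i over G_i, i.e. the
   block (M/X/G_i)|F_i coincides with (M/G_i)|F_i, a minor of the representable
   matroid M\X; projecting the representation away from the span of G_i
   represents it, contradicting the definition of a stack. *)
From HB Require Import structures.
From mathcomp Require Import all_boot all_order all_algebra all_fingroup all_field.
From mathcomp Require Import zify.
Set Implicit Arguments. Unset Strict Implicit. Unset Printing Implicit Defensive.

Section ProjectionRank.
Local Open Scope ring_scope.

(* Contracting a set of vectors G is projecting along their span B: the rank
   of the projected vectors of A is rank(A u G) - rank(G). *)
Lemma rank_sum_coker (K : fieldType) (n : nat) (I : finType)
    (g : I -> 'rV[K]_n) (A G : {set I}) :
  [disjoint A & G] ->
  \rank (\sum_(x in A) <<g x *m cokermx (\sum_(y in G) <<g y>>)%MS>>)%MS =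
  (\rank (\sum_(x in A :|: G) <<g x>>)%MS - \rank (\sum_(y in G) <<g y>>)%MS)%N.
Proof.
move=> dAG; set B := (\sum_(y in G) <<g y>>)%MS; set C := (\sum_(x in A) <<g x>>)%MS.
set P := cokermx B.
have sumAG : (\sum_(x in A :|: G) <<g x>>)%MS = (C + B)%MS.
  by rewrite -bigU //; apply: eq_bigl => x; rewrite !inE.
have projA : (\sum_(x in A) <<g x *m P>> :=: C *m P)%MS.
  apply: eqmx_trans (eqmx_sym (sumsmxMr _ _ _)).
  apply: eqmx_sums => x _; apply: eqmx_trans (genmxE _) _.
  exact/eqmx_sym/eqmxMr/genmxE.
have projAB : ((C + B)%MS *m P :=: C *m P)%MS.
  by apply: eqmx_trans (addsmxMr _ _ _) _; rewrite /P mulmx_coker; apply: addsmx0.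
have kerP : (kermx P :=: B)%MS.
  apply/eqmxP/andP; split; first by rewrite submxE mulmx_ker.
  by apply/sub_kermxP; rewrite mulmx_coker.
have rank_cap : \rank ((C + B) :&: kermx P)%MS = \rank B.
  apply: eqmx_rank; apply/andP; split; first by rewrite -kerP capmxSr.
  by rewrite sub_capmx addsmxSr kerP submx_refl.
have := mxrank_mul_ker (C + B)%MS P.
by rewrite projA sumAG projAB rank_cap => <-; rewrite addnK.
Qed.

End ProjectionRank.

Section Representability.
Variable T : finType.

Lemma iso_PG_representable (S : {set T}) (r : {set T} -> nat) (k q : nat) :
  iso_PG S r k q -> GFq_representable q S r.
Proof. by move=> [K [f [cardK _ _ _ repf]]]; exists K, k, f. Qed.

Lemma GFq_representable_ext (q : nat) (Z : {set T}) (r1 r2 : {set T} -> nat) :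
  (forall A : {set T}, A \subset Z -> r1 A = r2 A) ->
  GFq_representable q Z r2 -> GFq_representable q Z r1.
Proof.
move=> eqr [K [n [f [cardK repf]]]]; exists K, n, f; split => // A AZ.
by rewrite eqr ?repf.
Qed.

Lemma contraction_representable (q : nat) (Z G F : {set T}) (r : {set T} -> nat) :
  GFq_representable q Z r -> G \subset Z -> F \subset Z -> [disjoint F & G] ->
  GFq_representable q F (contr_rank r G).
Proof.
move=> [K [n [f [cardK repf]]]] GZ FZ dFG.
exists K, n, (fun x => f x *m cokermx (\sum_(y in G) <<f y>>)%MS)%R; split => // A AF.
have AZ := subset_trans AF FZ.
by rewrite rank_sum_coker ?(disjointWl AF dFG) // /contr_rank -!repf // subUset AZ.
Qed.

End Representability.

Lemma nonincreasing_stall (D : nat -> nat) (h : nat) :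
  (forall i, i < h.+1 -> D i.+1 <= D i) -> D 0 <= h ->
  exists2 i, i < h.+1 & D i.+1 = D i.
Proof.
move=> noninc D0h.
case: (boolP [exists i : 'I_h.+1, D i.+1 == D i]) => [/existsP[i /eqP]|/existsPn strict].
  by exists i.
have drop : forall i, i <= h.+1 -> D i + i <= D 0.
  elim=> [|i IH] lei; first by rewrite addn0.
  have := strict (Ordinal lei); have := noninc i lei; have := IH (ltnW lei).
  by rewrite /= => ? ? /eqP; lia.
by have := drop h.+1 (leqnn _); lia.
Qed.

Section MatroidRank.
Variables (T : finType) (E : {set T}) (r : {set T} -> nat).
Hypothesis matroidM : is_matroid E r.

Lemma rank_set0 : r set0 = 0.
Proof. by case: matroidM => bounded _ _; have := bounded set0 (sub0set _); rewrite cards0; lia. Qed.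

Lemma rank_le1 (e : T) : e \in E -> r [set e] <= 1.
Proof. by case: matroidM => bounded _ _ eE; rewrite -(cards1 e) bounded // sub1set. Qed.

Lemma rank_mono (A B : {set T}) : A \subset B -> B \subset E -> r A <= r B.
Proof. by case: matroidM => _ mono _; apply: mono. Qed.

Lemma rank_monoU (A B : {set T}) : A \subset E -> B \subset E -> r A <= r (A :|: B).
Proof. by move=> AE BE; apply: rank_mono (subsetUl _ _) _; rewrite subUset AE. Qed.

Lemma rank_submod (A B C : {set T}) : A \subset E -> B \subset E ->
  C \subset A :&: B -> r (A :|: B) + r C <= r A + r B.
Proof.
case: matroidM => _ _ submod AE BE CAB; have := submod A B AE BE.
by have := rank_mono CAB (subset_trans (subsetIl _ _) AE); lia.
Qed.

Lemma rank_add_loop (C : {set T}) (e : T) : C \subset E -> e \in E ->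
  r [set e] = 0 -> r (e |: C) <= r C.
Proof.
move=> CE eE loop_e; have := @rank_submod C [set e] set0 CE.
by rewrite sub1set setUC loop_e rank_set0 => /(_ eE (sub0set _)); lia.
Qed.

Lemma rank_add_parallel (C : {set T}) (x e : T) : C \subset E -> x \in C -> e \in E ->
  r [set x] = 1 -> r [set x; e] = 1 -> r (e |: C) <= r C.
Proof.
move=> CE xC eE rank_x rank_xe; have xE := subsetP CE x xC.
have xeE : [set x; e] \subset E by rewrite subUset !sub1set xE.
have := @rank_submod C [set x; e] [set x] CE xeE.
rewrite rank_x rank_xe subsetI !sub1set xC !inE eqxx => /(_ isT).
have -> : C :|: [set x; e] = e |: C.
  by apply/setP => y; rewrite !inE; case: eqP => [->|_]; rewrite ?xC ?orbT //= orbC.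
by lia.
Qed.

Lemma rank_closure (C D : {set T}) : C \subset E -> D \subset E ->
  (forall e, e \in D -> r (e |: C) <= r C) -> r (C :|: D) <= r C.
Proof.
move=> CE DE spanned.
suff span_seq : forall s : seq T, {subset s <= D} -> r (C :|: [set x in s]) <= r C.
  have -> : D = [set x in enum D] by apply/setP => x; rewrite inE mem_enum.
  by apply: span_seq => x; rewrite mem_enum.
elim=> [|x s IH] sD; first by rewrite (_ : [set x in [::]] = set0) ?setU0 //; apply/setP.
have xD : x \in D by apply: sD; rewrite inE eqxx.
set U := C :|: [set y in s].
have UE : U \subset E.
  by rewrite subUset CE; apply/subsetP => y; rewrite inE => ys; apply/(subsetP DE)/sD/predU1r.
have rU : r U <= r C by apply: IH => y ys; apply/sD/predU1r.
have xCE : x |: C \subset E by rewrite subUset sub1set (subsetP DE).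
have := @rank_submod U (x |: C) C UE xCE.
have -> : U :|: (x |: C) = C :|: [set y in x :: s].
  by apply/setP => y; rewrite /U !inE; case: (y == x); case: (y \in C); case: (y \in s); rewrite ?orbT.
by rewrite subsetI subsetUl subsetUr => /(_ isT); have := spanned x xD; lia.
Qed.

Lemma rank_eq_spanning (A B : {set T}) : A \subset E -> B \subset E ->
  (forall e, e \in B -> r (e |: A) <= r A) ->
  (forall e, e \in A -> r (e |: B) <= r B) -> r A = r B.
Proof.
move=> AE BE spanB spanA.
have := rank_closure AE BE spanB; have := rank_closure BE AE spanA.
have := rank_monoU AE BE; have := rank_monoU BE AE; rewrite [B :|: A]setUC; lia.
Qed.

Lemma contr_rank_antitone (X A B : {set T}) : X \subset E -> A \subset B -> B \subset E ->
  contr_rank r B X <= contr_rank r A X.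
Proof.
move=> XE AB BE; have AE := subset_trans AB BE.
have := @rank_submod (A :|: X) B A; rewrite subUset AE XE subsetI subsetUl AB.
have -> : A :|: X :|: B = B :|: X by rewrite setUAC (setUidPr AB).
move=> /(_ isT BE isT); rewrite /contr_rank ![X :|: _]setUC.
by have := rank_monoU AE XE; have := rank_monoU BE XE; lia.
Qed.

Lemma contr_rank_between (X A B C : {set T}) : X \subset E ->
  A \subset B -> B \subset C -> C \subset E ->
  contr_rank r C X = contr_rank r A X -> contr_rank r B X = contr_rank r A X.
Proof.
move=> XE AB BC CE flat; have BE := subset_trans BC CE.
have := contr_rank_antitone XE AB BE; have := contr_rank_antitone XE BC CE; lia.
Qed.

(* Ranks in M/X/G and in M/G differ by how much contracting A drops r_{M/G}(X). *)
Lemma contr_contr_rank (X G A : {set T}) : X \subset E -> G \subset E -> A \subset E ->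
  contr_rank (contr_rank r X) G A + contr_rank r G X =
  contr_rank r G A + contr_rank r (A :|: G) X.
Proof.
move=> XE GE AE; have AGE : A :|: G \subset E by rewrite subUset AE.
rewrite /contr_rank setUC [X :|: (A :|: G)]setUC.
have := rank_monoU XE GE; have := rank_monoU GE XE; have := rank_monoU GE AE.
have := rank_monoU AGE XE; have := @rank_mono (G :|: X) (A :|: G :|: X).
rewrite setSU ?subsetUr // subUset AGE XE => /(_ isT isT).
by rewrite [G :|: X]setUC [G :|: A]setUC; lia.
Qed.

Lemma simplification_representable (q : nat) (Z S : {set T}) :
  Z \subset E -> simplification_set Z r S ->
  GFq_representable q S r -> GFq_representable q Z r.
Proof.
move=> ZE [SZ rank_S _ parallel_S] [K [n [f [cardK repf]]]].
pose rep x := [pick y in S | (r [set x] == 1) && (r [set y; x] == 1)].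
have repP x y : rep x = Some y -> [/\ y \in S, r [set x] = 1 & r [set y; x] = 1].
  by rewrite /rep; case: pickP => // z /and3P[zS /eqP ? /eqP ?] [<-].
have SE := subset_trans SZ ZE.
exists K, n, (fun x => if rep x is Some y then f y else 0%R); split => // A AZ.
have AE := subset_trans AZ ZE.
pose R := [set y | [exists x in A, rep x == Some y]].
have RP y : y \in R -> exists2 x, x \in A & rep x = Some y.
  by rewrite inE => /exists_inP[x xA /eqP]; exists x.
have RS : R \subset S by apply/subsetP => y /RP[x _ /repP[]].
have rAR : r A = r R.
  apply: rank_eq_spanning (subset_trans RS SE) _ _ => // e.
    move=> /RP[x xA /repP[eS rank_x rank_ex]].
    by apply: (rank_add_parallel AE xA (subsetP SE e eS) rank_x); rewrite setUC.
  move=> eA; have eE := subsetP AE e eA; have rank_e_le1 := rank_le1 eE.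
  case rank_e: (r [set e] == 1); last first.
    by apply: rank_add_loop (subset_trans RS SE) eE _; lia.
  case rep_e: (rep e) => [y|]; last first.
    have [y yS rank_ye] := parallel_S e (subsetP AZ e eA) (eqP rank_e).
    by move: rep_e; rewrite /rep; case: pickP => // /(_ y); rewrite yS rank_e rank_ye eqxx.
  have [yS rank_ex rank_ye] := repP _ _ rep_e.
  apply: (rank_add_parallel (subset_trans RS SE) _ eE (rank_S y yS) rank_ye).
  by rewrite inE; apply/exists_inP; exists e; rewrite ?rep_e.
rewrite rAR repf //; apply: eqmx_rank; apply/andP; split.
  apply/sumsmx_subP => y /RP[x xA rep_x].
  by apply: (sumsmx_sup x) => //; rewrite rep_x submx_refl.
apply/sumsmx_subP => x xA; case rep_x: (rep x) => [y|]; last by rewrite genmx0 sub0mx.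
apply: (sumsmx_sup y); rewrite ?submx_refl //.
by rewrite inE; apply/exists_inP; exists x; rewrite ?rep_x.
Qed.

End MatroidRank.

Theorem lemma4p1 (T : finType) (q h : nat) (E X : {set T}) (r : {set T} -> nat) :
  prime_power q ->
  is_matroid E r ->
  X \subset E ->
  r X <= h ->
  si_iso_PG (E :\: X) r (r E) q ->
  ~ has_stack_restriction q h.+1 (E :\: X) (contr_rank r X).
Proof.
move=> _ matroidM XE rXh [S [simpS isoS]] [t [Y [YEX [F [FY disjF _ blocks]]]]].
have EXE : E :\: X \subset E := subsetDl _ _.
have repEX : GFq_representable q (E :\: X) r.
  exact: (simplification_representable matroidM EXE simpS) (iso_PG_representable isoS).
pose G i := \bigcup_(j < i) F j.
have G_succ i : G i.+1 = G i :|: F i by rewrite /G big_ord_recr.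
have FEX i : i < h.+1 -> F i \subset E :\: X by move=> ?; apply: subset_trans (FY i _) YEX.
have GEX i : i <= h.+1 -> G i \subset E :\: X.
  by move=> leih; apply/bigcupsP => j _; apply/FEX/(leq_trans (ltn_ord j)).
have [i ltih stall] : exists2 i, i < h.+1 & contr_rank r (G i.+1) X = contr_rank r (G i) X.
  apply: nonincreasing_stall => [j ltjh|].
    rewrite G_succ (contr_rank_antitone matroidM) ?subsetUl //.
    by rewrite -G_succ (subset_trans (GEX _ ltjh)).
  by rewrite /contr_rank /G big_ord0 setU0 (rank_set0 matroidM) subn0.
have [GiE FiE] := (subset_trans (GEX i (ltnW ltih)) EXE, subset_trans (FEX i ltih) EXE).
have [_ not_rep] := blocks i ltih; apply: not_rep.
apply: (@GFq_representable_ext _ _ _ _ (contr_rank r (G i))) => [A AF|].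
  have AGG : A :|: G i \subset G i.+1 by rewrite G_succ setUC setUS.
  have flatA : contr_rank r (A :|: G i) X = contr_rank r (G i) X.
    apply: (contr_rank_between matroidM XE (subsetUr _ _) AGG _ stall).
    by rewrite G_succ subUset GiE.
  by have := contr_contr_rank matroidM XE GiE (subset_trans AF FiE); rewrite flatA -/(G i); lia.
apply: contraction_representable repEX (GEX i (ltnW ltih)) (FEX i ltih) _.
apply/bigcup_disjoint => j _; apply: disjF ltih (ltn_trans (ltn_ord j) ltih) _.
by rewrite neq_ltn ltn_ord orbT.
Qed.
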